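(* Let $M\ge1$, $h_1,\dots,h_M\ge0$, $P_{\rm peak}>0$, $\sigma^2>0$ and $\lambda,\beta\ge0$. Then the problem $\max_{0\le p\le P_{\rm peak},\ 0\le\alpha_m\le1\ (m=1,\dots,M)}\ \log\Big(1+\frac{\sum_{m=1}^M\alpha_m h_mp}{\sigma^2}\Big)+\sum_{m=1}^M\lambda(1-\alpha_m)h_mp-\beta p$ is equivalent to (in particular, has the same optimal value as) the problem $\max_{0\le\alpha\le1,\ 0\le p\le P_{\rm peak}}\ \log\Big(1+\frac{\alpha\sum_{m=1}^M h_mp}{\sigma^2}\Big)+(1-\alpha)\sum_{m=1}^M\lambda h_mp-\beta p.$
   Context: Here $h_m$ is the channel power gain to receive antenna $m$, $\alpha_m$ is the power splitting ratio at antenna $m$, $p$ the transmit power, and $\log$ is the natural logarithm. *)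

From mathcomp Require Import all_boot all_order all_algebra.
From mathcomp Require Import reals exp.
Set Implicit Arguments. Unset Strict Implicit. Unset Printing Implicit Defensive.
Import Order.TTheory GRing.Theory Num.Theory.
Local Open Scope ring_scope.

Definition obj1 (R : realType) (M : nat) (h : 'I_M -> R) (sigma2 lam beta : R)
  (p : R) (alpha : 'I_M -> R) : R :=
  ln (1 + (\sum_(m < M) alpha m * h m * p) / sigma2)
  + \sum_(m < M) lam * (1 - alpha m) * h m * p - beta * p.

Definition feas1 (R : realType) (M : nat) (Ppeak p : R) (alpha : 'I_M -> R) : Prop :=
  0 <= p <= Ppeak /\ forall m, 0 <= alpha m <= 1.

Definition obj2 (R : realType) (M : nat) (h : 'I_M -> R) (sigma2 lam beta : R)
  (p alpha : R) : R :=
  ln (1 + alpha * (\sum_(m < M) h m * p) / sigma2)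
  + (1 - alpha) * (\sum_(m < M) lam * h m * p) - beta * p.

Definition feas2 (R : realType) (Ppeak p alpha : R) : Prop :=
  0 <= alpha <= 1 /\ 0 <= p <= Ppeak.

Definition is_max1 (R : realType) (M : nat) (h : 'I_M -> R) (Ppeak sigma2 lam beta v : R) : Prop :=
  (exists p alpha, feas1 Ppeak p alpha /\ obj1 h sigma2 lam beta p alpha = v) /\
  (forall p alpha, feas1 Ppeak p alpha -> obj1 h sigma2 lam beta p alpha <= v).

Definition is_max2 (R : realType) (M : nat) (h : 'I_M -> R) (Ppeak sigma2 lam beta v : R) : Prop :=
  (exists p alpha, feas2 Ppeak p alpha /\ obj2 h sigma2 lam beta p alpha = v) /\
  (forall p alpha, feas2 Ppeak p alpha -> obj2 h sigma2 lam beta p alpha <= v).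

(* Since 0 <= alpha_m <= 1 and h_m >= 0, the received power sum_m alpha_m h_m
   is a fraction alpha of sum_m h_m, and both objectives depend on the ratios
   only through that sum; so every feasible point of one problem has a
   feasible point of the other with the same objective value. The common
   optimal value exists because the second objective is continuous on the
   compact box [0, P_peak] x [0, 1]. *)
From mathcomp Require Import all_boot all_order all_algebra.
From mathcomp Require Import ring.
From mathcomp Require Import all_classical all_reals all_analysis.
Set Implicit Arguments. Unset Strict Implicit. Unset Printing Implicit Defensive.
Import Order.TTheory GRing.Theory Num.Theory.
Import numFieldNormedType.Exports.
Local Open Scope ring_scope.

Lemma weighted_sum_common_ratio (R : realFieldType) (I : finType)
    (w x : I -> R) :
  (forall i, 0 <= x i) -> (forall i, 0 <= w i <= 1) ->
  exists2 a, 0 <= a <= 1 & \sum_i w i * x i = a * \sum_i x i.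
Proof.
move=> x_ge0 w01; set S := \sum_i w i * x i; set X := \sum_i x i.
have S_ge0 : 0 <= S.
  by apply: sumr_ge0 => i _; case/andP: (w01 i) => w0 _; rewrite mulr_ge0.
have S_leX : S <= X.
  by apply: ler_sum => i _; case/andP: (w01 i) => _ w1; rewrite ler_piMl.
have [X0 | X_neq0] := eqVneq X 0.
  exists 0; first by rewrite lexx ler01.
  by rewrite mul0r; apply/eqP; rewrite eq_le S_ge0 -X0 S_leX.
have X_gt0 : 0 < X by rewrite lt_def X_neq0 sumr_ge0.
exists (S / X); last by rewrite divfK.
by rewrite divr_ge0 ?(ltW X_gt0) //= ler_pdivrMr // mul1r.
Qed.

Section Objectives.
Variables (R : realType) (M : nat) (h : 'I_M -> R) (sigma2 lam beta : R).

Lemma obj1_sumE (p : R) (alpha : 'I_M -> R) :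
  obj1 h sigma2 lam beta p alpha =
  ln (1 + (\sum_m alpha m * h m) * p / sigma2)
  + lam * (\sum_m h m - \sum_m alpha m * h m) * p - beta * p.
Proof.
rewrite /obj1 mulr_suml -sumrB mulr_sumr mulr_suml.
by congr (_ + _ - _); rewrite mulr_suml; apply: eq_bigr => m _; ring.
Qed.

Lemma obj2_sumE (p a : R) :
  obj2 h sigma2 lam beta p a =
  ln (1 + a * ((\sum_m h m) * p) / sigma2)
  + (1 - a) * ((lam * \sum_m h m) * p) - beta * p.
Proof. by rewrite /obj2 -!mulr_suml -mulr_sumr. Qed.

Lemma obj1_common_ratio (p a : R) (alpha : 'I_M -> R) :
  \sum_m alpha m * h m = a * \sum_m h m ->
  obj1 h sigma2 lam beta p alpha = obj2 h sigma2 lam beta p a.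
Proof. by move=> eS; rewrite obj1_sumE obj2_sumE eS mulrA; congr (_ + _ - _); ring. Qed.

Lemma obj1_const (p a : R) :
  obj1 h sigma2 lam beta p (fun=> a) = obj2 h sigma2 lam beta p a.
Proof. by apply: obj1_common_ratio; rewrite mulr_sumr. Qed.

(* The absolute value keeps the argument of [ln] positive on the whole plane,
   so [obj2_ext] is continuous everywhere; it agrees with [obj2] for p, a >= 0. *)
Definition obj2_ext (q : R * R) : R :=
  ln (1 + `|q.2 * ((\sum_m h m) * q.1)| / sigma2)
  + (1 - q.2) * ((lam * \sum_m h m) * q.1) - beta * q.1.

Lemma obj2_extE (p a : R) : (forall m, 0 <= h m) -> 0 <= p -> 0 <= a ->
  obj2_ext (p, a) = obj2 h sigma2 lam beta p a.
Proof.
move=> h_ge0 p0 a0; rewrite obj2_sumE /obj2_ext /= ger0_norm //.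
by rewrite !mulr_ge0 // sumr_ge0.
Qed.

Lemma continuous_obj2_ext : 0 < sigma2 -> continuous obj2_ext.
Proof.
move=> s_gt0 q.
have cst (c : R) : continuous (fun _ : R * R => c) by move=> ?; exact: cvg_cst.
have fst : continuous (fun q : R * R => q.1) by move=> ?; exact: cvg_fst.
have snd : continuous (fun q : R * R => q.2) by move=> ?; exact: cvg_snd.
have lin (c : R) : continuous (fun q : R * R => c * q.1).
  by move=> ?; apply: cvgM; [exact: cst|exact: fst].
apply: cvgB; last exact: lin.
apply: cvgD; last by apply: cvgM; [apply: cvgB; [exact: cst|exact: snd]|exact: lin].
have arg_cont : {for q, continuous (fun q : R * R =>
    1 + `|q.2 * ((\sum_m h m) * q.1)| / sigma2)}.
  apply: cvgD; first exact: cst.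
  apply: cvgM; last exact: cst.
  apply: (@continuous_comp _ _ _ (fun q : R * R => q.2 * ((\sum_m h m) * q.1))).
    by apply: cvgM; [exact: snd|exact: lin].
  exact: norm_continuous.
apply: (continuous_comp arg_cont); apply: continuous_ln.
by rewrite ltr_wpDr // divr_ge0 // ltW.
Qed.

Lemma obj2_attains_max (Ppeak : R) :
  (forall m, 0 <= h m) -> 0 <= Ppeak -> 0 < sigma2 ->
  exists v, is_max2 h Ppeak sigma2 lam beta v.
Proof.
move=> h_ge0 P_ge0 s_gt0.
pose box : set (R * R) := (`[0, Ppeak] `*` `[0, 1])%classic.
have box_compact : compact box by apply: compact_setX; exact: segment_compact.
have in_box p a : feas2 Ppeak p a <-> (p, a) \in box.
  by rewrite inE /box /= !in_itv /=; split=> -[].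
have box_neq0 : (box !=set0)%classic.
  by exists (0, 0); apply/set_mem/in_box; rewrite /feas2 lexx ler01 P_ge0.
have [[p0 a0] /in_box feas0 max0] := compact_EVT_max box_neq0 box_compact
  (continuous_subspaceT (continuous_obj2_ext s_gt0)).
have ext_feas p a : feas2 Ppeak p a -> obj2_ext (p, a) = obj2 h sigma2 lam beta p a.
  by case=> /andP[a0' _] /andP[p0' _]; exact: obj2_extE.
exists (obj2_ext (p0, a0)); split; first by exists p0, a0; rewrite ext_feas.
by move=> p a feas; rewrite -ext_feas //; apply: max0; apply/in_box.
Qed.

Lemma is_max2_is_max1 (Ppeak v : R) : (forall m, 0 <= h m) ->
  is_max2 h Ppeak sigma2 lam beta v -> is_max1 h Ppeak sigma2 lam beta v.
Proof.
move=> h_ge0 [[p0 [a0 [[a0_01 p0P] <-]]] max2]; split.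
  by exists p0, (fun=> a0); split; [split | exact: obj1_const].
move=> p alpha [pP alpha01].
have [a a01 eS] := weighted_sum_common_ratio h_ge0 alpha01.
by rewrite (obj1_common_ratio _ eS); apply: max2; split.
Qed.

End Objectives.

Theorem lemma5p2 (R : realType) (M : nat) (h : 'I_M -> R) (Ppeak sigma2 lam beta : R) :
  (1 <= M)%N -> (forall m, 0 <= h m) -> 0 < Ppeak -> 0 < sigma2 ->
  0 <= lam -> 0 <= beta ->
  exists v : R, is_max1 h Ppeak sigma2 lam beta v /\ is_max2 h Ppeak sigma2 lam beta v.
Proof.
move=> _ h_ge0 P_gt0 s_gt0 _ _.
have [v max2] := obj2_attains_max lam beta h_ge0 (ltW P_gt0) s_gt0.
by exists v; split=> //; exact: is_max2_is_max1.
Qed.
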